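(* Let $F$ be the class of functions computed by scalar-output $\ell_\infty$-dist nets with input dimension $d$, width $w\ge d$ and depth (number of hidden layers) $L$, with all parameters ranging over the reals. Then the VC dimension of $F$ satisfies $\mathrm{VCdim}(F)=\tilde O(L^2w^4)$.
   Context: An $\ell_\infty$-dist net takes $\mathbf x^{(0)}=\mathbf x\in\mathbb{R}^d$ and computes, for each layer $l$ and unit $k$, $x^{(l)}_k=\|\mathbf x^{(l-1)}-\mathbf w^{(l,k)}\|_\infty+b^{(l,k)}$ with real parameters $\mathbf w^{(l,k)}$, $b^{(l,k)}$; the width is the maximum number of units per layer. The VC dimension of a real-valued class is that of the associated sign classifiers $\mathbf x\mapsto\mathrm{sign}(g(\mathbf x))$. $\tilde O(\cdot)$ hides absolute constants and polylogarithmic factors. *)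

From Stdlib Require Import Reals List Arith.
Import ListNotations.
Open Scope R_scope.

(* A vector of R^n is a list of length n. *)
Fixpoint linf (x w : list R) : R :=
  match x, w with
  | a :: x', c :: w' => Rmax (Rabs (a - c)) (linf x' w')
  | _, _ => 0
  end.

(* A unit is a pair (weight vector w, bias b); it computes ||x - w||_inf + b. *)
Definition unit_t : Type := (list R * R)%type.
Definition layer : Type := list unit_t.

Definition eval_unit (u : unit_t) (x : list R) : R := linf x (fst u) + snd u.
Definition eval_layer (ly : layer) (x : list R) : list R :=
  map (fun u => eval_unit u x) ly.

(* A net is the list of its layers: the L hidden layers followed by the output layer. *)
Definition net : Type := list layer.
Fixpoint eval_net (N : net) (x : list R) : list R :=
  match N with
  | [] => x
  | ly :: N' => eval_net N' (eval_layer ly x)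
  end.

Definition net_out (N : net) (x : list R) : R := hd 0 (eval_net N x).

Fixpoint dims_ok (n : nat) (N : net) : Prop :=
  match N with
  | [] => n = 1%nat
  | ly :: N' => (forall u, In u ly -> length (fst u) = n) /\ dims_ok (length ly) N'
  end.

Definition arch_ok (d w L : nat) (N : net) : Prop :=
  dims_ok d N /\ length N = S L /\ Forall (fun ly => (length ly <= w)%nat) N.

Definition shattered (d w L : nat) (pts : list (list R)) : Prop :=
  NoDup pts /\ Forall (fun x => length x = d) pts /\
  forall lab : list R -> bool,
    exists N, arch_ok d w L N /\
      forall x, In x pts -> (0 <= net_out N x <-> lab x = true).

(* Fix the shape (the layer widths) of a net, so that its parameters form a
   vector th in R^P with P <= (L+1) w (w+1).  Unfolding |y - w|_oo + b >= 0 as a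
   disjunction, and its negation as a conjunction, of conditions
   +-(y_i - w_i) + b >= 0, layer by layer from the output down to the input,
   shows that the sign of the output at x is decided by the signs of the affine
   functions th |-> t x_j + u . th with t in {-1,0,1} and u in {-1,0,1}^P: each
   step of the unfolding uses one unit and one coordinate of a layer, so every
   parameter keeps a coefficient in {-1,0,1}.  For m shattered points these are
   H = 3 m (d+1) 3^P affine functions, which cut R^P into at most (H+1)^P sign
   patterns.  Summing over the (w+1)^(L+1) shapes,
   2^m <= (w+1)^(L+1) (3 m (d+1) 3^P + 1)^P, hence m = O(P^2) = O(L^2 w^4)
   with no logarithmic factor. *)

From Stdlib Require Import Reals List Arith Lra Lia Classical IndefiniteDescription.
Import ListNotations.
Open Scope R_scope.

Fixpoint dot (a x : list R) : R :=
  match a, x with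
  | a0 :: a', x0 :: x' => a0 * x0 + dot a' x'
  | _, _ => 0
  end.

Fixpoint lincomb (al be : R) (x y : list R) : list R :=
  match x, y with
  | a :: x', b :: y' => (al * a + be * b) :: lincomb al be x' y'
  | _, _ => []
  end.

Lemma length_lincomb al be x y :
  length x = length y -> length (lincomb al be x y) = length x.
Proof.
  revert y; induction x as [|a x IH]; intros [|b y] Hl; simpl in *; try lia.
  now rewrite IH by lia.
Qed.

Lemma dot_comm a x : dot a x = dot x a.
Proof.
  revert x; induction a as [|a0 a IH]; intros [|x0 x]; simpl; try ring.
  rewrite IH; ring.
Qed.

Lemma dot_lincomb_r a al be x y : length x = length y ->
  dot a (lincomb al be x y) = al * dot a x + be * dot a y.
Proof.
  revert a y; induction x as [|u x IH]; intros [|c a] [|v y] Hl; simpl in *;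
    try lia; try ring.
  rewrite IH by lia; ring.
Qed.

Lemma dot_lincomb_l a al be x y : length x = length y ->
  dot (lincomb al be x y) a = al * dot x a + be * dot y a.
Proof.
  intros Hl; rewrite dot_comm, dot_lincomb_r, !(dot_comm a) by exact Hl; ring.
Qed.

Lemma dot_app u1 u2 x1 x2 :
  length u1 = length x1 -> dot (u1 ++ u2) (x1 ++ x2) = dot u1 x1 + dot u2 x2.
Proof.
  revert x1; induction u1 as [|a u1 IH]; intros [|b x1] Hl; simpl in *;
    try lia; try ring.
  rewrite IH by lia; ring.
Qed.

Lemma dot_zero_l a x : (forall y, In y a -> y = 0) -> dot a x = 0.
Proof.
  revert x; induction a as [|a0 a IH]; intros [|x0 x] Ha; simpl; auto.
  rewrite (Ha a0 (or_introl eq_refl)), IH by (intros; apply Ha; now right).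
  ring.
Qed.

Lemma dot_repeat0_l k x : dot (repeat 0 k) x = 0.
Proof. apply dot_zero_l; intros y Hy; exact (repeat_spec _ _ _ Hy). Qed.

(** * Sign patterns of affine functions *)

Definition affine : Type := (list R * R)%type.

Definition aff_eval (f : affine) (th : list R) : R := dot (fst f) th + snd f.

Definition nonnegb (r : R) : bool := if Rle_dec 0 r then true else false.

Lemma nonnegb_true r : nonnegb r = true <-> 0 <= r.
Proof. unfold nonnegb; destruct Rle_dec; split; easy. Qed.

Lemma nonnegb_false r : nonnegb r = false <-> r < 0.
Proof. unfold nonnegb; destruct Rle_dec; split; intros; try easy; lra. Qed.

Definition sign_pattern (fs : list affine) (th : list R) : list bool :=
  map (fun f => nonnegb (aff_eval f th)) fs.

Definition realized (fs : list affine) (P : nat) (s : list bool) : Prop :=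
  exists th, length th = P /\ sign_pattern fs th = s.

Lemma aff_eval_lincomb f t x y : length x = length y ->
  aff_eval f (lincomb (1 - t) t x y) = (1 - t) * aff_eval f x + t * aff_eval f y.
Proof. intros Hl; unfold aff_eval; rewrite dot_lincomb_r by exact Hl; ring. Qed.

Lemma sign_pattern_lincomb fs t x y : 0 <= t < 1 -> length x = length y ->
  sign_pattern fs x = sign_pattern fs y ->
  sign_pattern fs (lincomb (1 - t) t x y) = sign_pattern fs y.
Proof.
  intros Ht Hl E; unfold sign_pattern in *.
  apply map_ext_in; intros f Hf.
  pose proof (proj1 map_ext_in_iff E f Hf) as Ef; cbv beta in Ef.
  rewrite aff_eval_lincomb by exact Hl.
  destruct (nonnegb (aff_eval f y)) eqn:Ey;
    [apply nonnegb_true in Ey, Ef | apply nonnegb_false in Ey, Ef].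
  - apply nonnegb_true; nra.
  - apply nonnegb_false; nra.
Qed.

Lemma sign_pattern_eq_In fs th1 th2 f :
  sign_pattern fs th1 = sign_pattern fs th2 -> In f fs ->
  (0 <= aff_eval f th1 <-> 0 <= aff_eval f th2).
Proof.
  intros E Hf; pose proof (proj1 map_ext_in_iff E f Hf) as Ef; cbv beta in Ef.
  rewrite <- !nonnegb_true, Ef; reflexivity.
Qed.

Lemma sign_pattern_root_between f fs th1 th2 :
  length th1 = length th2 -> 0 <= aff_eval f th1 -> aff_eval f th2 < 0 ->
  sign_pattern fs th1 = sign_pattern fs th2 ->
  exists th, length th = length th1 /\ aff_eval f th = 0 /\
    sign_pattern fs th = sign_pattern fs th2.
Proof.
  intros Hl S1 S2 E.
  set (t := aff_eval f th1 / (aff_eval f th1 - aff_eval f th2)).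
  assert (Ht : 0 <= t < 1).
  { assert (Et : t * (aff_eval f th1 - aff_eval f th2) = aff_eval f th1)
      by (unfold t; field; lra).
    split; nra. }
  exists (lincomb (1 - t) t th1 th2); split; [|split].
  - now apply length_lincomb.
  - rewrite aff_eval_lincomb by exact Hl; unfold t; field; lra.
  - now apply sign_pattern_lincomb.
Qed.

(* Solving [a . th + c = 0] for a coordinate with nonzero coefficient expresses
   every affine function on the hyperplane as an affine function of the
   remaining coordinates. *)
Lemma hyperplane_chart (a : list R) (c : R) : (exists x, In x a /\ x <> 0) ->
  exists tr : affine -> affine,
    (forall h, length (fst h) = length a -> length (fst (tr h)) = pred (length a)) /\
    forall th, length th = length a -> dot a th + c = 0 ->
      exists th', length th' = pred (length a) /\
        forall h, length (fst h) = length a -> aff_eval h th = aff_eval (tr h) th'.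
Proof.
  revert c; induction a as [|a0 a IH]; intros c Hnz;
    [destruct Hnz as [? [[] _]]|].
  destruct (Req_dec a0 0) as [Ha0|Ha0].
  - assert (Hnz' : exists x, In x a /\ x <> 0).
    { destruct Hnz as [x [[<-|Hx] Hx0]]; [contradiction|eauto]. }
    assert (Ha : a <> []) by (destruct Hnz' as [x [Hx _]]; now destruct a).
    destruct (IH c Hnz') as [tr [Htr_len Htr]].
    exists (fun h => (hd 0 (fst h) :: fst (tr (tl (fst h), snd h)), snd (tr (tl (fst h), snd h)))).
    split.
    + intros [[|b0 b] e] Hl; simpl in *; [lia|].
      rewrite (Htr_len (b, e)) by (simpl; lia).
      destruct a; [contradiction|reflexivity].
    + intros [|x0 th] Hl Hth; simpl in Hl; [lia|].
      simpl in Hth; rewrite Ha0 in Hth.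
      destruct (Htr th ltac:(lia) ltac:(lra)) as [th' [Hl' Hev]].
      exists (x0 :: th'); split; [simpl; destruct a; [contradiction|simpl in *; lia]|].
      intros [[|b0 b] e] Hb; simpl in Hb; [lia|].
      specialize (Hev (b, e) ltac:(simpl; lia)).
      unfold aff_eval in *; simpl in *; lra.
  - exists (fun h => (lincomb 1 (- (hd 0 (fst h) / a0)) (tl (fst h)) a,
                    snd h - hd 0 (fst h) / a0 * c)).
    split.
    + intros [[|b0 b] e] Hl; simpl in *; [lia|].
      rewrite length_lincomb; lia.
    + intros [|x0 th] Hl Hth; simpl in Hl, Hth; [lia|].
      exists th; split; [simpl; lia|].
      intros [[|b0 b] e] Hb; simpl in Hb; [lia|].
      unfold aff_eval; simpl.
      rewrite dot_lincomb_l by lia.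
      replace x0 with (- (dot a th + c) / a0) by (field_simplify_eq; lra).
      field; exact Ha0.
Qed.

(* [fs'] is [fs] restricted to the hyperplane [f = 0] in coordinates of [R^P]; if
   [f] is constant, no pattern occurs with both signs of [f]. *)
Lemma realized_on_hyperplane f fs P :
  length (fst f) = S P -> Forall (fun h => length (fst h) = S P) fs ->
  exists fs', length fs' = length fs /\ Forall (fun h => length (fst h) = P) fs' /\
    forall s, realized (f :: fs) (S P) (true :: s) ->
              realized (f :: fs) (S P) (false :: s) -> realized fs' P s.
Proof.
  intros Hf Hfs.
  destruct (classic (exists x, In x (fst f) /\ x <> 0)) as [Hnz|Hz].
  - destruct (hyperplane_chart (fst f) (snd f) Hnz) as [tr [Htr_len Htr]].
    rewrite Hf in Htr_len, Htr; simpl in Htr_len, Htr.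
    rewrite Forall_forall in Hfs.
    exists (map tr fs); split; [apply length_map|split].
    { apply Forall_forall; intros h Hh; apply in_map_iff in Hh as [h0 [<- Hh0]].
      auto. }
    intros s [th1 [Hl1 E1]] [th2 [Hl2 E2]]; simpl in E1, E2.
    injection E1 as S1 P1; injection E2 as S2 P2.
    apply nonnegb_true in S1; apply nonnegb_false in S2.
    destruct (sign_pattern_root_between f fs th1 th2) as [th [Hth [Hzero Hpat]]];
      [lia|exact S1|exact S2|congruence|].
    destruct (Htr th ltac:(lia) Hzero) as [th' [Hl' Hev]].
    exists th'; split; [exact Hl'|].
    rewrite <- P2, <- Hpat; unfold sign_pattern; rewrite map_map.
    apply map_ext_in; intros h Hh; rewrite Hev; auto.
  - assert (Hconst : forall th, aff_eval f th = snd f).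
    { intros th; unfold aff_eval; rewrite dot_zero_l; [ring|].
      intros y Hy; apply NNPP; intros Hy0; apply Hz; eauto. }
    exists (map (fun _ => (repeat 0 P, 0)) fs); split; [apply length_map|split].
    { apply Forall_forall; intros h Hh; apply in_map_iff in Hh as [h0 [<- _]].
      apply repeat_length. }
    intros s [th1 [_ E1]] [th2 [_ E2]]; simpl in E1, E2.
    injection E1 as S1 _; injection E2 as S2 _.
    rewrite Hconst in S1, S2; congruence.
Qed.

Lemma NoDup_const_length_le_1 {A} (l : list A) a :
  NoDup l -> (forall b, In b l -> b = a) -> (length l <= 1)%nat.
Proof.
  intros Hl Ha; destruct l as [|b [|c l]]; simpl; try lia.
  inversion Hl as [|? ? Hb]; subst.
  exfalso; apply Hb; rewrite (Ha b), (Ha c) by (simpl; auto); now left.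
Qed.

Lemma NoDup_split_heads (pats : list (list bool)) :
  NoDup pats -> (forall s, In s pats -> s <> []) ->
  exists A B : list (list bool),
    NoDup A /\ NoDup B /\ length pats = (length A + length B)%nat /\
    (forall s, In s A -> exists b, In (b :: s) pats) /\
    (forall s, In s B -> In (true :: s) pats /\ In (false :: s) pats).
Proof.
  induction pats as [|p pats IH]; intros Hnd Hne.
  { exists [], []; split; [|split; [|split; [|split]]]; simpl; try constructor; tauto. }
  inversion Hnd as [|? ? Hp Hnd']; subst.
  destruct (IH Hnd' (fun s Hs => Hne s (or_intror Hs)))
    as [A [B [HA [HB [Hlen [HAin HBin]]]]]].
  destruct p as [|b s]; [now destruct (Hne [] (or_introl eq_refl))|].
  destruct (in_dec (list_eq_dec Bool.bool_dec) s A) as [HsA|HsA].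
  - assert (Hother : In (negb b :: s) pats).
    { destruct (HAin s HsA) as [b' Hb']; destruct b, b'; simpl; auto; contradiction. }
    exists A, (s :: B); split; [|split; [|split; [|split]]]; auto.
    + constructor; auto; intros HsB; apply Hp.
      destruct (HBin s HsB), b; auto.
    + simpl; lia.
    + intros s' Hs'; destruct (HAin s' Hs') as [b' Hb']; exists b'; now right.
    + intros s' [<-|Hs']; [destruct b; simpl; auto|].
      destruct (HBin s' Hs'); simpl; auto.
  - exists (s :: A), B; split; [|split; [|split; [|split]]]; auto.
    + now constructor.
    + simpl; lia.
    + intros s' [<-|Hs']; [exists b; now left|].
      destruct (HAin s' Hs') as [b' Hb']; exists b'; now right.
    + intros s' Hs'; destruct (HBin s' Hs'); simpl; auto.
Qed.

Lemma pow_succ_add_le n p : ((n + 1) ^ S p + (n + 1) ^ p <= (n + 2) ^ S p)%nat.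
Proof.
  assert (H : ((n + 1) ^ p <= (n + 2) ^ p)%nat) by (apply Nat.pow_le_mono_l; lia).
  simpl; nia.
Qed.

(* Splitting along the first hyperplane: the patterns are counted by those of the
   other [H] functions on [R^(P+1)] plus those on the hyperplane, a copy of [R^P],
   and [(H+1)^(P+1) + (H+1)^P <= (H+2)^(P+1)]. *)
Theorem realized_patterns_length_le H : forall P fs pats,
  length fs = H -> Forall (fun f => length (fst f) = P) fs ->
  NoDup pats -> (forall s, In s pats -> realized fs P s) ->
  (length pats <= (H + 1) ^ P)%nat.
Proof.
  induction H as [|H IH]; intros P fs pats Hlen Hdim Hnd Hreal.
  - rewrite Nat.pow_1_l; destruct fs; [|discriminate].
    apply (NoDup_const_length_le_1 _ []); auto.
    intros s Hs; now destruct (Hreal s Hs) as [th [_ <-]].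
  - destruct fs as [|f fs]; [discriminate|injection Hlen as <-].
    apply Forall_cons_iff in Hdim as [Hf Hfs].
    destruct P as [|P].
    { apply (NoDup_const_length_le_1 _ (sign_pattern (f :: fs) [])); auto.
      intros s Hs; destruct (Hreal s Hs) as [[|] [Hl <-]]; easy. }
    destruct (NoDup_split_heads pats Hnd) as [A [B [HA [HB [-> [HAin HBin]]]]]].
    { intros s Hs; destruct (Hreal s Hs) as [th [_ <-]]; discriminate. }
    assert (HlenA : (length A <= (length fs + 1) ^ S P)%nat).
    { apply (IH (S P) fs); auto.
      intros s Hs; destruct (HAin s Hs) as [b Hb].
      destruct (Hreal _ Hb) as [th [Hl E]]; injection E as _ E; now exists th. }
    destruct (realized_on_hyperplane f fs P Hf Hfs) as [fs' [Hlen' [Hdim' Hhyp]]].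
    assert (HlenB : (length B <= (length fs + 1) ^ P)%nat).
    { apply (IH P fs'); auto.
      intros s Hs; destruct (HBin s Hs); auto. }
    pose proof (pow_succ_add_le (length fs) P).
    replace (S (length fs) + 1)%nat with (length fs + 2)%nat by lia; lia.
Qed.

(** * Ternary probes of an l_oo-dist net *)

Definition ternary (a : R) : Prop := In a [-1; 0; 1].

Definition ternary_vec (P : nat) (u : list R) : Prop := length u = P /\ Forall ternary u.

#[local] Hint Unfold ternary : core.

Lemma ternary_vec_app p q u v :
  ternary_vec p u -> ternary_vec q v -> ternary_vec (p + q) (u ++ v).
Proof.
  intros [Hu Fu] [Hv Fv]; split; [rewrite length_app; lia|now apply Forall_app].
Qed.

Lemma ternary_vec_repeat0 k : ternary_vec k (repeat 0 k).
Proof.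
  split; [apply repeat_length|].
  apply Forall_forall; intros x Hx; rewrite (repeat_spec _ _ _ Hx); auto with datatypes.
Qed.

Fixpoint onehot (n i : nat) (a : R) : list R :=
  match n, i with
  | O, _ => []
  | S n, O => a :: repeat 0 n
  | S n, S i => 0 :: onehot n i a
  end.

Lemma ternary_vec_onehot n i a : ternary a -> ternary_vec n (onehot n i a).
Proof.
  intros Ha; revert i; induction n as [|n IH]; intros [|i]; simpl.
  - now split.
  - now split.
  - destruct (ternary_vec_repeat0 n) as [Hl Hf]; split; [simpl; lia|now constructor].
  - destruct (IH i) as [Hl Hf]; split; [simpl; lia|constructor; auto with datatypes].
Qed.

Lemma dot_onehot n i a w : length w = n -> dot (onehot n i a) w = a * nth i w 0.
Proof.
  revert i w; induction n as [|n IH]; intros [|i] [|x w] Hl; simpl in *; try lia.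
  - ring.
  - ring.
  - rewrite dot_repeat0_l; ring.
  - rewrite IH by lia; ring.
Qed.

Lemma dot_concat_select (B1 B2 : list (list R)) j u :
  map (@length R) B1 = map (@length R) B2 -> ternary_vec (length (nth j B1 [])) u ->
  exists v, ternary_vec (length (concat B1)) v /\
    dot v (concat B1) = dot u (nth j B1 []) /\ dot v (concat B2) = dot u (nth j B2 []).
Proof.
  revert B2 j; induction B1 as [|b1 B1 IH]; intros [|b2 B2] j Hsh Hu;
    try discriminate; simpl in Hsh.
  - exists []; destruct j, Hu as [Hu _]; destruct u; simpl in *; try lia;
      repeat split; auto.
  - injection Hsh as Hb Hsh.
    destruct j as [|j]; simpl in Hu |- *.
    + exists (u ++ repeat 0 (length (concat B1))).
      split; [rewrite length_app; apply ternary_vec_app; auto using ternary_vec_repeat0|].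
      destruct Hu as [Hu _].
      rewrite !dot_app, !dot_repeat0_l by lia; split; ring.
    + destruct (IH B2 j Hsh Hu) as [v [Hv [E1 E2]]].
      exists (repeat 0 (length b1) ++ v).
      split; [rewrite length_app; apply ternary_vec_app; auto using ternary_vec_repeat0|].
      rewrite !dot_app, !dot_repeat0_l by (rewrite repeat_length; lia).
      rewrite E1, E2; split; ring.
Qed.

Definition flat_unit (k : unit_t) : list R := fst k ++ [snd k].
Definition flat_layer (ly : layer) : list R := concat (map flat_unit ly).
Definition flat_net (N : net) : list R := concat (map flat_layer N).

Definition shape (N : net) : list nat := map (@length unit_t) N.

(* A probe is a form [t y_j + u . th] with ternary coefficients; coordinates past
   the end of [y] read as [0], so [t = 0] probes the parameters alone. *)
Definition same_probe_signs (y1 th1 y2 th2 : list R) : Prop :=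
  forall t j u, ternary t -> ternary_vec (length th1) u ->
    (0 <= t * nth j y1 0 + dot u th1 <-> 0 <= t * nth j y2 0 + dot u th2).

Lemma nonneg_iff_eq_compat X1 X2 Y1 Y2 :
  X1 = Y1 -> X2 = Y2 -> (0 <= X1 <-> 0 <= X2) -> (0 <= Y1 <-> 0 <= Y2).
Proof. now intros -> ->. Qed.

Lemma nonneg_Rmax_add A B K : 0 <= Rmax A B + K <-> 0 <= A + K \/ 0 <= B + K.
Proof.
  unfold Rmax; destruct Rle_dec;
    split; [intros; right; lra|intros [|]; lra|intros; left; lra|intros [|]; lra].
Qed.

Lemma nonneg_opp_Rmax_add A B K : 0 <= - Rmax A B + K <-> 0 <= - A + K /\ 0 <= - B + K.
Proof.
  unfold Rmax; destruct Rle_dec;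
    split; [intros; split; lra|intros []; lra|intros; split; lra|intros []; lra].
Qed.

Lemma nonneg_Rabs_add z K : 0 <= Rabs z + K <-> 0 <= z + K \/ 0 <= - z + K.
Proof.
  unfold Rabs; destruct Rcase_abs;
    split; [intros; right; lra|intros [|]; lra|intros; left; lra|intros [|]; lra].
Qed.

Lemma nonneg_opp_Rabs_add z K : 0 <= - Rabs z + K <-> 0 <= - z + K /\ 0 <= z + K.
Proof.
  unfold Rabs; destruct Rcase_abs;
    split; [intros; split; lra|intros []; lra|intros; split; lra|intros []; lra].
Qed.

Lemma linf_probe_signs y1 w1 y2 w2 K1 K2 :
  length y1 = length w1 -> length y2 = length w2 -> length y1 = length y2 ->
  (forall t i, ternary t ->
     (0 <= t * (nth i y1 0 - nth i w1 0) + K1 <-> 0 <= t * (nth i y2 0 - nth i w2 0) + K2)) ->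
  (0 <= linf y1 w1 + K1 <-> 0 <= linf y2 w2 + K2) /\
  (0 <= - linf y1 w1 + K1 <-> 0 <= - linf y2 w2 + K2).
Proof.
  revert w1 y2 w2; induction y1 as [|a1 y1 IH];
    intros [|c1 w1] [|a2 y2] [|c2 w2] L1 L2 L3 Hprobe; simpl in L1, L2, L3; try lia.
  - assert (HK : 0 <= K1 <-> 0 <= K2).
    { refine (nonneg_iff_eq_compat _ _ _ _ _ _ (Hprobe 0 O _)); auto with datatypes; ring. }
    simpl; rewrite Ropp_0, !Rplus_0_l; now split.
  - destruct (IH w1 y2 w2 ltac:(lia) ltac:(lia) ltac:(lia)
      (fun t i => Hprobe t (S i))) as [IHmax IHmin].
    assert (Hp : 0 <= (a1 - c1) + K1 <-> 0 <= (a2 - c2) + K2).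
    { refine (nonneg_iff_eq_compat _ _ _ _ _ _ (Hprobe 1 O _)); auto with datatypes; simpl; ring. }
    assert (Hm : 0 <= - (a1 - c1) + K1 <-> 0 <= - (a2 - c2) + K2).
    { refine (nonneg_iff_eq_compat _ _ _ _ _ _ (Hprobe (-1) O _)); auto with datatypes; simpl; ring. }
    simpl; rewrite !nonneg_Rmax_add, !nonneg_opp_Rmax_add, !nonneg_Rabs_add, !nonneg_opp_Rabs_add.
    tauto.
Qed.

Lemma unit_probe_signs y1 w1 b1 D1 y2 w2 b2 D2 t :
  length y1 = length w1 -> length y2 = length w2 -> length y1 = length y2 -> ternary t ->
  (forall t' i, ternary t' ->
     (0 <= t' * (nth i y1 0 - nth i w1 0) + (t * b1 + D1) <->
      0 <= t' * (nth i y2 0 - nth i w2 0) + (t * b2 + D2))) ->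
  (0 <= t * (linf y1 w1 + b1) + D1 <-> 0 <= t * (linf y2 w2 + b2) + D2).
Proof.
  intros L1 L2 L3 Ht Hprobe.
  destruct (linf_probe_signs y1 w1 y2 w2 _ _ L1 L2 L3 Hprobe) as [Hmax Hmin].
  destruct Ht as [<-|[<-|[<-|[]]]].
  - refine (nonneg_iff_eq_compat _ _ _ _ _ _ Hmin); ring.
  - refine (nonneg_iff_eq_compat _ _ _ _ _ _ (Hprobe 0 O _)); auto with datatypes; ring.
  - refine (nonneg_iff_eq_compat _ _ _ _ _ _ Hmax); ring.
Qed.

Lemma map_length_flat_unit (n : nat) (ly : layer) : (forall k, In k ly -> length (fst k) = n) ->
  map (@length R) (map flat_unit ly) = repeat (S n) (length ly).
Proof.
  induction ly as [|k ly IH]; intros W; simpl; auto; f_equal.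
  - unfold flat_unit; rewrite length_app, W by (now left); simpl; lia.
  - apply IH; intros; apply W; now right.
Qed.

Lemma length_flat_layer (n : nat) (ly : layer) : (forall k, In k ly -> length (fst k) = n) ->
  length (flat_layer ly) = (length ly * S n)%nat.
Proof.
  induction ly as [|k ly IH]; intros W; simpl; auto.
  unfold flat_layer in *; simpl; unfold flat_unit at 1.
  rewrite !length_app, W, IH by (now left) || (intros; apply W; now right).
  simpl; lia.
Qed.

Lemma nth_eval_layer (ly : layer) (y : list R) (j : nat) : (j < length ly)%nat ->
  nth j (eval_layer ly y) 0 = eval_unit (nth j ly ([], 0)) y.
Proof.
  intros Hj; unfold eval_layer.
  rewrite (nth_indep _ 0 (eval_unit ([], 0) y)) by (rewrite length_map; exact Hj).
  apply (map_nth (fun u => eval_unit u y)).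
Qed.

Lemma ternary_opp t : ternary t -> ternary (- t).
Proof.
  intros [<-|[<-|[<-|[]]]]; simpl; [right; right; left|right; left|left]; ring.
Qed.

Lemma layer_unit_probe_signs (n : nat) (ly1 ly2 : layer) (y1 y2 th1 th2 : list R) k v t i u :
  (forall k, In k ly1 -> length (fst k) = n) -> (forall k, In k ly2 -> length (fst k) = n) ->
  length ly1 = length ly2 ->
  same_probe_signs y1 (flat_layer ly1 ++ th1) y2 (flat_layer ly2 ++ th2) ->
  (k < length ly1)%nat -> ternary t -> ternary_vec (S n) v -> ternary_vec (length th1) u ->
  (0 <= t * nth i y1 0 + dot v (flat_unit (nth k ly1 ([], 0))) + dot u th1 <->
   0 <= t * nth i y2 0 + dot v (flat_unit (nth k ly2 ([], 0))) + dot u th2).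
Proof.
  intros W1 W2 Hlen Hprobe Hk Ht Hv Hu.
  assert (Hsh : map (@length R) (map flat_unit ly1) = map (@length R) (map flat_unit ly2))
    by (rewrite (map_length_flat_unit n ly1), (map_length_flat_unit n ly2); auto).
  assert (Hflat : length (flat_layer ly1) = length (flat_layer ly2))
    by (rewrite (length_flat_layer n ly1), (length_flat_layer n ly2); auto).
  assert (Hnth : forall ly, (k < length ly)%nat ->
    nth k (map flat_unit ly) [] = flat_unit (nth k ly ([], 0))).
  { intros ly Hkl; rewrite (nth_indep _ _ (flat_unit ([], 0)))
      by (rewrite length_map; exact Hkl); apply map_nth. }
  destruct (dot_concat_select _ _ k v Hsh) as [v' [Hv' [E1 E2]]].
  { rewrite Hnth by (exact Hk); unfold flat_unit; rewrite length_app, W1; simpl.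
    - now replace (n + 1)%nat with (S n) by lia.
    - apply nth_In; exact Hk. }
  rewrite Hnth in E1, E2 by lia.
  fold (flat_layer ly1) in Hv', E1; fold (flat_layer ly2) in E2.
  assert (Hv'u : ternary_vec (length (flat_layer ly1 ++ th1)) (v' ++ u))
    by (rewrite length_app; now apply ternary_vec_app).
  specialize (Hprobe t i (v' ++ u) Ht Hv'u).
  destruct Hv' as [Hv' _].
  rewrite !dot_app, E1, E2 in Hprobe by lia.
  refine (nonneg_iff_eq_compat _ _ _ _ _ _ Hprobe); ring.
Qed.

(* The unit [(w_j, b_j)] turns the probe [t y'_j] of the next layer into the
   probes [t' (y_i - w_ji) + t b_j] of the current one. *)
Lemma eval_layer_probe_signs (n : nat) (ly1 ly2 : layer) (y1 y2 th1 th2 : list R) :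
  (forall k, In k ly1 -> length (fst k) = n) -> (forall k, In k ly2 -> length (fst k) = n) ->
  length ly1 = length ly2 -> length y1 = n -> length y2 = n ->
  same_probe_signs y1 (flat_layer ly1 ++ th1) y2 (flat_layer ly2 ++ th2) ->
  same_probe_signs (eval_layer ly1 y1) th1 (eval_layer ly2 y2) th2.
Proof.
  intros W1 W2 Hlen L1 L2 Hprobe t j u Ht Hu.
  destruct (Nat.lt_ge_cases j (length ly1)) as [Hj|Hj].
  - rewrite !nth_eval_layer by lia; unfold eval_unit.
    assert (Hw1 : length (fst (nth j ly1 ([], 0))) = n) by (apply W1, nth_In; lia).
    assert (Hw2 : length (fst (nth j ly2 ([], 0))) = n) by (apply W2, nth_In; lia).
    apply unit_probe_signs; [lia|lia|lia|exact Ht|].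
    intros t' i Ht'.
    assert (Hv : ternary_vec (S n) (onehot n i (- t') ++ [t])).
    { replace (S n) with (n + 1)%nat by lia.
      apply ternary_vec_app; [now apply ternary_vec_onehot, ternary_opp|].
      split; [reflexivity|now constructor]. }
    pose proof (proj1 (ternary_vec_onehot n i _ (ternary_opp t' Ht'))) as Hoh.
    pose proof (layer_unit_probe_signs n ly1 ly2 y1 y2 th1 th2 j _ t' i u
                  W1 W2 Hlen Hprobe Hj Ht' Hv Hu) as Hunit.
    unfold flat_unit in Hunit.
    rewrite !dot_app, !dot_onehot in Hunit by lia; simpl in Hunit.
    refine (nonneg_iff_eq_compat _ _ _ _ _ _ Hunit); ring.
  - rewrite !nth_overflow by (unfold eval_layer; rewrite length_map; lia).
    assert (Hflat : length (flat_layer ly1) = length (flat_layer ly2))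
      by (rewrite (length_flat_layer n ly1), (length_flat_layer n ly2); auto).
    assert (Hz : ternary_vec (length (flat_layer ly1 ++ th1))
                   (repeat 0 (length (flat_layer ly1)) ++ u))
      by (rewrite length_app; apply ternary_vec_app; auto using ternary_vec_repeat0).
    specialize (Hprobe 0 O _ ltac:(auto with datatypes) Hz).
    rewrite !dot_app, !dot_repeat0_l in Hprobe by (rewrite repeat_length; lia).
    refine (nonneg_iff_eq_compat _ _ _ _ _ _ Hprobe); ring.
Qed.

Theorem net_out_probe_signs : forall (N1 N2 : net) (n : nat) (y1 y2 : list R),
  dims_ok n N1 -> dims_ok n N2 -> shape N1 = shape N2 ->
  length y1 = n -> length y2 = n ->
  same_probe_signs y1 (flat_net N1) y2 (flat_net N2) ->
  (0 <= net_out N1 y1 <-> 0 <= net_out N2 y2).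
Proof.
  induction N1 as [|ly1 N1 IH];
    intros [|ly2 N2] n y1 y2 D1 D2 Hsh L1 L2 Hprobe; try discriminate.
  - simpl in D1; subst n.
    destruct y1 as [|a1 []], y2 as [|a2 []]; try discriminate.
    specialize (Hprobe 1 O [] ltac:(auto with datatypes) (conj eq_refl (Forall_nil _))).
    refine (nonneg_iff_eq_compat _ _ _ _ _ _ Hprobe); unfold net_out; simpl; ring.
  - injection Hsh as Hlen Hsh.
    destruct D1 as [W1 D1], D2 as [W2 D2].
    change (0 <= net_out N1 (eval_layer ly1 y1) <-> 0 <= net_out N2 (eval_layer ly2 y2)).
    apply (IH N2 (length ly1)); auto.
    + now rewrite Hlen.
    + apply length_map.
    + rewrite Hlen; apply length_map.
    + now apply (eval_layer_probe_signs n).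
Qed.

(** * Counting the labelings of a shattered set *)

Fixpoint words {A : Type} (alpha : list A) (n : nat) : list (list A) :=
  match n with
  | O => [[]]
  | S n => flat_map (fun a => map (cons a) (words alpha n)) alpha
  end.

Lemma length_words {A : Type} (alpha : list A) n :
  length (words alpha n) = (length alpha ^ n)%nat.
Proof.
  induction n as [|n IH]; simpl; auto.
  rewrite flat_map_constant_length with (c := length (words alpha n))
    by (intros; apply length_map).
  rewrite IH; lia.
Qed.

Lemma In_words {A : Type} (alpha : list A) n u :
  In u (words alpha n) <-> length u = n /\ Forall (fun a => In a alpha) u.
Proof.
  revert u; induction n as [|n IH]; intros u; simpl.
  - split; [intros [<-|[]]; auto|intros [Hl _]; destruct u; [auto|discriminate]].
  - rewrite in_flat_map; split.
    + intros [a [Ha Hu]]; apply in_map_iff in Hu as [v [<- Hv]].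
      apply IH in Hv as [Hl Hf]; simpl; auto.
    + intros [Hl Hf]; destruct u as [|a v]; [discriminate|].
      apply Forall_cons_iff in Hf as [Ha Hf].
      exists a; split; auto; apply in_map, IH; simpl in Hl; auto.
Qed.

Lemma NoDup_words {A : Type} (alpha : list A) n : NoDup alpha -> NoDup (words alpha n).
Proof.
  intros Ha; induction n as [|n IH]; simpl; [repeat constructor; auto|].
  revert IH; generalize (words alpha n) as W; intros W HW.
  induction Ha as [|a alpha' Ha' Hnd IHa]; simpl; [constructor|].
  apply NoDup_app; auto.
  - apply NoDup_map_NoDup_ForallPairs; auto; intros u v _ _ E; now injection E.
  - intros u Hu Hu'; apply in_map_iff in Hu as [v [<- _]].
    apply in_flat_map in Hu' as [a' [Ha'' Hv]]; apply in_map_iff in Hv as [v' [E _]].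
    injection E as -> _; contradiction.
Qed.

Lemma ternary_vec_In_words P u : ternary_vec P u <-> In u (words [-1; 0; 1] P).
Proof. rewrite In_words; reflexivity. Qed.

(* All indices [j >= d] read [0] from [x]; [j = d] represents them. *)
Definition probe_forms (pts : list (list R)) (d P : nat) : list affine :=
  flat_map (fun x => flat_map (fun t => flat_map (fun j =>
      map (fun u => (u, t * nth j x 0)) (words [-1; 0; 1] P))
    (seq 0 (S d))) [-1; 0; 1]) pts.

Lemma length_probe_forms pts d P :
  length (probe_forms pts d P) = (length pts * (3 * (S d * 3 ^ P)))%nat.
Proof.
  unfold probe_forms; apply flat_map_constant_length; intros x _.
  apply flat_map_constant_length; intros t _.
  rewrite flat_map_constant_length with (c := (3 ^ P)%nat), length_seq; [lia|].
  intros j _; now rewrite length_map, length_words.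
Qed.

Lemma probe_forms_dim pts d P : Forall (fun f => length (fst f) = P) (probe_forms pts d P).
Proof.
  apply Forall_forall; intros f Hf; unfold probe_forms in Hf.
  apply in_flat_map in Hf as [x [_ Hf]]; apply in_flat_map in Hf as [t [_ Hf]].
  apply in_flat_map in Hf as [j [_ Hf]]; apply in_map_iff in Hf as [u [<- Hu]].
  now apply ternary_vec_In_words in Hu as [Hu _].
Qed.

Lemma In_probe_forms pts d P x t j u : In x pts -> ternary t -> (j <= d)%nat ->
  ternary_vec P u -> In (u, t * nth j x 0) (probe_forms pts d P).
Proof.
  intros Hx Ht Hj Hu; unfold probe_forms.
  apply in_flat_map; exists x; split; auto.
  apply in_flat_map; exists t; split; auto.
  apply in_flat_map; exists j; split; [apply in_seq; lia|].
  apply (in_map (fun u => (u, t * nth j x 0))), ternary_vec_In_words, Hu.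
Qed.

Fixpoint param_count (n : nat) (sh : list nat) : nat :=
  match sh with
  | [] => O
  | k :: sh => (k * S n + param_count k sh)%nat
  end.

Lemma length_flat_net (N : net) n :
  dims_ok n N -> length (flat_net N) = param_count n (shape N).
Proof.
  revert n; induction N as [|ly N IH]; intros n D; simpl; auto.
  destruct D as [W D]; unfold flat_net in *; simpl.
  rewrite length_app, (length_flat_layer n ly W), (IH _ D); reflexivity.
Qed.

Lemma param_count_le n w sh : (n <= w)%nat -> Forall (fun k => (k <= w)%nat) sh ->
  (param_count n sh <= length sh * (w * S w))%nat.
Proof.
  revert n; induction sh as [|k sh IH]; intros n Hn Hsh; simpl; [lia|].
  apply Forall_cons_iff in Hsh as [Hk Hsh]; specialize (IH k Hk Hsh); nia.
Qed.

Fixpoint index_of (x : list R) (l : list (list R)) : nat :=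
  match l with
  | [] => O
  | y :: l => if list_eq_dec Req_EM_T x y then O else S (index_of x l)
  end.

Lemma index_of_nth l i : NoDup l -> (i < length l)%nat -> index_of (nth i l []) l = i.
Proof.
  revert i; induction l as [|y l IH]; intros i Hnd Hi; simpl in *; [lia|].
  apply NoDup_cons_iff in Hnd as [Hy Hnd].
  destruct i as [|i]; simpl; destruct list_eq_dec as [E|E]; auto.
  - contradiction.
  - exfalso; apply Hy; rewrite <- E; apply nth_In; lia.
  - f_equal; apply IH; auto; lia.
Qed.

Lemma length_le_mul_fibers {A K : Type} (K_dec : forall a b : K, {a = b} + {a <> b})
  (f : A -> K) (keys : list K) (G : nat) (l : list A) :
  (forall a, In a l -> In (f a) keys) ->
  (forall k, In k keys ->
     (length (filter (fun a => if K_dec (f a) k then true else false) l) <= G)%nat) ->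
  (length l <= length keys * G)%nat.
Proof.
  revert l; induction keys as [|k keys IH]; intros l Hkeys Hfib.
  { destruct l as [|a l]; [simpl; lia|destruct (Hkeys a (or_introl eq_refl))]. }
  set (p := fun a => if K_dec (f a) k then true else false).
  assert (Hsub : forall q (l' : list A),
    (length (filter q (filter (fun a => negb (p a)) l')) <= length (filter q l'))%nat).
  { intros q l'; induction l' as [|a l' IHl]; simpl; [lia|].
    destruct (negb (p a)); simpl; destruct (q a); simpl; lia. }
  rewrite <- (filter_length p l); simpl.
  pose proof (Hfib k (or_introl eq_refl)) as Hk; fold p in Hk.
  enough (length (filter (fun a => negb (p a)) l) <= length keys * G)%nat by lia.
  apply IH.
  - intros a Ha; apply filter_In in Ha as [Ha Hp]; unfold p in Hp.
    destruct (Hkeys a Ha) as [E|E]; auto; destruct K_dec; [discriminate|congruence].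
  - intros k' Hk'; eapply Nat.le_trans; [apply Hsub|]; apply Hfib; now right.
Qed.

Definition labeling (pts : list (list R)) (b : list bool) (x : list R) : bool :=
  nth (index_of x pts) b false.

Section Shattered.

Variables (d w L : nat) (pts : list (list R)).
Hypothesis pts_NoDup : NoDup pts.
Hypothesis pts_dim : Forall (fun x => length x = d) pts.
Variable net_of : list bool -> net.
Hypothesis net_of_arch : forall b, arch_ok d w L (net_of b).
Hypothesis net_of_labeling : forall b x, In x pts ->
  (0 <= net_out (net_of b) x <-> labeling pts b x = true).

Lemma probe_pattern_injective P b1 b2 :
  length b1 = length pts -> length b2 = length pts -> shape (net_of b1) = shape (net_of b2) ->
  length (flat_net (net_of b1)) = P ->
  sign_pattern (probe_forms pts d P) (flat_net (net_of b1)) =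
  sign_pattern (probe_forms pts d P) (flat_net (net_of b2)) ->
  b1 = b2.
Proof.
  intros Hb1 Hb2 Hsh HP E.
  destruct (net_of_arch b1) as [D1 _], (net_of_arch b2) as [D2 _].
  apply nth_ext with false false; [congruence|]; intros i Hi.
  set (x := nth i pts []).
  assert (Hx : In x pts) by (apply nth_In; lia).
  assert (Lx : length x = d) by (rewrite Forall_forall in pts_dim; auto).
  assert (Hout : 0 <= net_out (net_of b1) x <-> 0 <= net_out (net_of b2) x).
  { apply (net_out_probe_signs _ _ d); auto.
    intros t j u Ht Hu.
    assert (Hj : nth j x 0 = nth (Nat.min j d) x 0).
    { destruct (Nat.le_gt_cases d j).
      - rewrite !nth_overflow by lia; reflexivity.
      - now rewrite Nat.min_l by lia. }
    rewrite HP in Hu.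
    pose proof (sign_pattern_eq_In _ _ _ _ E
      (In_probe_forms pts d P x t (Nat.min j d) u Hx Ht (Nat.le_min_r j d) Hu)) as K.
    unfold aff_eval in K; simpl in K; rewrite Hj, !(Rplus_comm (t * _)); exact K. }
  rewrite !net_of_labeling in Hout by exact Hx.
  unfold labeling, x in Hout; rewrite index_of_nth in Hout by (auto; lia).
  destruct (nth i b1 false), (nth i b2 false); intuition congruence.
Qed.

Lemma shape_fiber_length_le sh bs :
  NoDup bs -> (forall b, In b bs -> length b = length pts /\ shape (net_of b) = sh) ->
  (length bs <= (length pts * (3 * (S d * 3 ^ param_count d sh)) + 1)
                  ^ param_count d sh)%nat.
Proof.
  intros Hnd Hbs; set (P := param_count d sh).
  assert (HP : forall b, In b bs -> length (flat_net (net_of b)) = P).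
  { intros b Hb; destruct (net_of_arch b) as [D _].
    rewrite (length_flat_net _ d D).
    now rewrite (proj2 (Hbs b Hb)). }
  rewrite <- (length_map (fun b => sign_pattern (probe_forms pts d P) (flat_net (net_of b)))).
  rewrite <- length_probe_forms.
  apply realized_patterns_length_le with (fs := probe_forms pts d P);
    auto using probe_forms_dim.
  - apply NoDup_map_NoDup_ForallPairs; auto.
    intros b1 b2 Hb1 Hb2 E.
    destruct (Hbs b1 Hb1) as [L1 S1], (Hbs b2 Hb2) as [L2 S2].
    apply (probe_pattern_injective P); auto; congruence.
  - intros s Hs; apply in_map_iff in Hs as [b [<- Hb]].
    exists (flat_net (net_of b)); auto.
Qed.

Lemma two_pow_length_le : (d <= w)%nat ->
  let Q := (S L * (w * S w))%nat in
  (2 ^ length pts <= S w ^ S L * (length pts * (3 * (S d * 3 ^ Q)) + 1) ^ Q)%nat.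
Proof.
  intros Hdw Q; set (m := length pts).
  replace (2 ^ m)%nat with (length (words [true; false] m))
    by (rewrite length_words; reflexivity).
  replace (S w ^ S L)%nat with (length (words (seq 0 (S w)) (S L)))
    by (rewrite length_words, length_seq; reflexivity).
  apply (length_le_mul_fibers (list_eq_dec Nat.eq_dec) (fun b => shape (net_of b))).
  - intros b _; destruct (net_of_arch b) as [_ [Hlen Hw]].
    apply In_words; split; [unfold shape; now rewrite length_map|].
    unfold shape; apply Forall_map; eapply Forall_impl; [|exact Hw].
    intros ly Hly; apply in_seq; simpl in Hly |- *; lia.
  - intros sh Hsh; apply In_words in Hsh as [Hsh_len Hsh_w].
    set (bs := filter _ _).
    assert (HP : (param_count d sh <= Q)%nat).
    { unfold Q; rewrite <- Hsh_len; apply param_count_le; auto.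
      eapply Forall_impl; [|exact Hsh_w]; intros k Hk; apply in_seq in Hk; lia. }
    eapply Nat.le_trans; [apply (shape_fiber_length_le sh)|].
    + apply NoDup_filter, NoDup_words; repeat constructor; simpl; intuition discriminate.
    + intros b Hb; apply filter_In in Hb as [Hb Hs]; apply In_words in Hb as [Hb _].
      destruct list_eq_dec; [now split|discriminate].
    + apply Nat.le_trans with ((m * (3 * (S d * 3 ^ Q)) + 1) ^ param_count d sh)%nat.
      * apply Nat.pow_le_mono_l, Nat.add_le_mono_r, Nat.mul_le_mono_l, Nat.mul_le_mono_l,
          Nat.mul_le_mono_l, Nat.pow_le_mono_r; lia.
      * apply Nat.pow_le_mono_r; lia.
Qed.

End Shattered.

Lemma shattered_two_pow_length_le d w L pts : (d <= w)%nat -> shattered d w L pts ->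
  let Q := (S L * (w * S w))%nat in
  (2 ^ length pts <= S w ^ S L * (length pts * (3 * (S d * 3 ^ Q)) + 1) ^ Q)%nat.
Proof.
  intros Hdw [Hnd [Hdim Hlab]].
  destruct (functional_choice (fun b N => arch_ok d w L N /\ forall x, In x pts ->
                (0 <= net_out N x <-> labeling pts b x = true))
              (fun b => Hlab (labeling pts b))) as [net_of Hnet].
  exact (two_pow_length_le d w L pts Hnd Hdim net_of
           (fun b => proj1 (Hnet b)) (fun b => proj2 (Hnet b)) Hdw).
Qed.

(** * The bound O(L^2 w^4) *)

Lemma two_pow_bound_simplify m A c Q :
  (A <= 2 ^ Q)%nat -> (c <= 2 ^ Q)%nat ->
  (2 ^ m <= A * (m * (3 * (c * 3 ^ Q)) + 1) ^ Q)%nat ->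
  (2 ^ m <= (m + 1) ^ Q * 2 ^ (3 * Q * Q + 3 * Q))%nat.
Proof.
  intros HA Hc H.
  assert (H1 : (1 <= 2 ^ Q)%nat) by (apply (Nat.pow_le_mono_r 2 0); lia).
  assert (H3 : (3 ^ Q <= 2 ^ Q * 2 ^ Q)%nat)
    by (rewrite <- Nat.pow_mul_l; apply Nat.pow_le_mono_l; lia).
  assert (Hbase : (m * (3 * (c * 3 ^ Q)) + 1 <= (m + 1) * 2 ^ (3 * Q + 2))%nat).
  { replace (3 * Q + 2)%nat with (Q + (Q + (Q + 2)))%nat by lia.
    rewrite !Nat.pow_add_r; change (2 ^ 2)%nat with 4%nat.
    assert (3 * (c * 3 ^ Q) <= 2 ^ Q * (2 ^ Q * (2 ^ Q * 4)))%nat by nia.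
    nia. }
  assert (Hpow : ((m * (3 * (c * 3 ^ Q)) + 1) ^ Q <= (m + 1) ^ Q * 2 ^ ((3 * Q + 2) * Q))%nat)
    by (rewrite Nat.pow_mul_r, <- Nat.pow_mul_l; now apply Nat.pow_le_mono_l).
  replace (3 * Q * Q + 3 * Q)%nat with (Q + (3 * Q + 2) * Q)%nat by ring.
  rewrite Nat.pow_add_r; nia.
Qed.

Lemma ln_le x y : 0 < x -> x <= y -> ln x <= ln y.
Proof.
  intros Hx Hxy; destruct (Rle_lt_or_eq_dec _ _ Hxy) as [Hlt|<-];
    [now apply Rlt_le, ln_increasing|lra].
Qed.

Lemma ln_le_sub_1 y : 0 < y -> ln y <= y - 1.
Proof. intros Hy; pose proof (exp_ineq1_le (ln y)) as H; rewrite exp_ln in H; lra. Qed.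

Lemma le_of_two_pow_le m Q :
  (2 ^ m <= (m + 1) ^ Q * 2 ^ (3 * Q * Q + 3 * Q))%nat -> (m <= 41 * Q * Q)%nat.
Proof.
  intros H; destruct (Nat.eq_0_gt_0_cases Q) as [->|HQ].
  { pose proof (Nat.pow_gt_lin_r 2 m ltac:(lia)); simpl in H; lia. }
  apply INR_le; apply le_INR in H.
  rewrite mult_INR, !pow_INR, plus_INR in H; rewrite !mult_INR.
  replace (INR 2) with 2 in H by reflexivity; replace (INR 1) with 1 in H by reflexivity.
  replace (INR 41) with 41 by (simpl; ring).
  set (M := INR m) in *; set (q := INR Q) in *.
  assert (Hq : 1 <= q) by (apply (le_INR 1); exact HQ).
  assert (HM : 0 <= M) by apply pos_INR.
  apply ln_le in H; [|apply pow_lt; lra].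
  rewrite ln_mult, !ln_pow in H by (try apply pow_lt; lra).
  rewrite plus_INR, !mult_INR in H; replace (INR 3) with 3 in H by (simpl; ring).
  fold M q in H.
  assert (Hln2 : / 2 < ln 2 <= 1) by (split; [apply ln_lt_2|pose proof (ln_le_sub_1 2); lra]).
  (* [ln (M + 1) <= ln (4 q) + (M + 1) / (4 q) - 1] with [ln (4 q) <= 4 q - 1] *)
  assert (Hlog : q * ln (M + 1) <= 4 * q * q + (M + 1) / 4).
  { replace (M + 1) with ((4 * q) * ((M + 1) / (4 * q))) by (field; lra).
    rewrite ln_mult by (try apply Rdiv_lt_0_compat; lra).
    pose proof (ln_le_sub_1 (4 * q) ltac:(lra)).
    pose proof (ln_le_sub_1 ((M + 1) / (4 * q)) ltac:(apply Rdiv_lt_0_compat; lra)).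
    assert (q * ((M + 1) / (4 * q)) = (M + 1) / 4) by (field; lra).
    nra. }
  assert (HMl : M / 2 <= M * ln 2) by nra.
  assert (Hql : (3 * q * q + 3 * q) * ln 2 <= 3 * q * q + 3 * q) by nra.
  nra.
Qed.

Lemma shattered_length_le d w L pts : (d <= w)%nat -> shattered d w L pts ->
  (length pts <= 41 * (S L * (w * S w)) * (S L * (w * S w)))%nat.
Proof.
  intros Hdw Hs.
  apply le_of_two_pow_le.
  assert (Hw : (S w <= 2 ^ w)%nat) by (apply Nat.pow_gt_lin_r; lia).
  apply (two_pow_bound_simplify _ (S w ^ S L) (S d)).
  - eapply Nat.le_trans; [apply Nat.pow_le_mono_l, Hw|].
    rewrite <- Nat.pow_mul_r; apply Nat.pow_le_mono_r; nia.
  - apply Nat.le_trans with (2 ^ w)%nat; [lia|].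
    apply Nat.pow_le_mono_r; nia.
  - now apply shattered_two_pow_length_le.
Qed.

Theorem lemma7 :
  exists (C : R) (k : nat), 0 < C /\
    forall (d w L : nat) (pts : list (list R)),
      (1 <= d)%nat -> (d <= w)%nat -> (1 <= L)%nat ->
      shattered d w L pts ->
      INR (length pts) <=
        C * INR L ^ 2 * INR w ^ 4 * (ln (INR (L * w) + 2)) ^ k.
Proof.
  exists 656, 0%nat; split; [lra|].
  intros d w L pts Hd Hdw HL Hs.
  assert (Hnat : (length pts <= 656 * L ^ 2 * w ^ 4)%nat).
  { pose proof (shattered_length_le d w L pts Hdw Hs) as Hm.
    assert (HQ : (S L * (w * S w) <= 4 * L * (w * w))%nat) by nia.
    assert (HQ2 : (S L * (w * S w) * (S L * (w * S w)) <=
                   4 * L * (w * w) * (4 * L * (w * w)))%nat)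
      by (apply Nat.mul_le_mono; exact HQ).
    simpl; nia. }
  apply le_INR in Hnat; rewrite !mult_INR, !pow_INR in Hnat.
  simpl (_ ^ 0); rewrite Rmult_1_r.
  replace (INR 656) with 656 in Hnat by (simpl; ring); exact Hnat.
Qed.
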